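(* Let $A$ be a positive $2\times 2$ matrix that is not doubly stochastic. If the column scaled matrix $A\,Y(A)$ is doubly stochastic, then $A$ is of the form $A=\begin{pmatrix} a & ct\\ c & at\end{pmatrix}$ for some positive reals $a,c,t$, and \[ S(A)=A\,Y(A)=\begin{pmatrix} a/(a+c) & c/(a+c)\\ c/(a+c) & a/(a+c)\end{pmatrix}. \] If the row scaled matrix $X(A)\,A$ is doubly stochastic, then $A$ is of the form $A=\begin{pmatrix} a & b\\ bt & at\end{pmatrix}$ for some positive reals $a,b,t$, and \[ S(A)=X(A)\,A=\begin{pmatrix} a/(a+b) & b/(a+b)\\ b/(a+b) & a/(a+b)\end{pmatrix}. \]
   Context: A positive matrix has all entries positive. For an $n\times n$ matrix $A=(a_{i,j})$ let $\mathrm{row}_i(A)=\sum_j a_{i,j}$ and $\mathrm{col}_j(A)=\sum_i a_{i,j}$; $A$ is doubly stochastic if all row and column sums equal $1$. For positive $A$ let $X(A)=\mathrm{diag}(1/\mathrm{row}_1(A),\ldots,1/\mathrm{row}_n(A))$ (row scaling: $X(A)A$) and $Y(A)=\mathrm{diag}(1/\mathrm{col}_1(A),\ldots,1/\mathrm{col}_n(A))$ (column scaling: $AY(A)$). The alternate minimization sequence of $A$ is $A^{(0)}=A$, $A^{(2k+1)}=A^{(2k)}\,Y(A^{(2k)})$, $A^{(2k+2)}=X(A^{(2k+1)})\,A^{(2k+1)}$ ($k\ge 0$); its limit $S(A)=\lim_{\ell\to\infty}A^{(\ell)}$ is the alternate minimization (Sinkhorn) limit of $A$. *)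

From HB Require Import structures.
From mathcomp Require Import all_boot all_order all_algebra.
From mathcomp Require Import all_classical all_reals all_analysis.
Set Implicit Arguments. Unset Strict Implicit. Unset Printing Implicit Defensive.
Import Order.TTheory GRing.Theory Num.Theory.
Import numFieldNormedType.Exports.
Local Open Scope classical_set_scope.
Local Open Scope ring_scope.

Section Sinkhorn.
Variables (R : realType) (n : nat).

Definition positive_mx (A : 'M[R]_n) : Prop := forall i j, 0 < A i j.

Definition row_sum (A : 'M[R]_n) (i : 'I_n) : R := \sum_(j < n) A i j.
Definition col_sum (A : 'M[R]_n) (j : 'I_n) : R := \sum_(i < n) A i j.

Definition doubly_stochastic (A : 'M[R]_n) : Prop :=
  (forall i, row_sum A i = 1) /\ (forall j, col_sum A j = 1).

Definition Xmx (A : 'M[R]_n) : 'M[R]_n := diag_mx (\row_i (row_sum A i)^-1).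
Definition Ymx (A : 'M[R]_n) : 'M[R]_n := diag_mx (\row_j (col_sum A j)^-1).

(* alternate minimization sequence: A^(0) = A, A^(2k+1) = A^(2k) Y(A^(2k)),
   A^(2k+2) = X(A^(2k+1)) A^(2k+1) *)
Fixpoint am_seq (A : 'M[R]_n) (l : nat) : 'M[R]_n :=
  match l with
  | 0 => A
  | l'.+1 => let B := am_seq A l' in
             if odd l' then Xmx B *m B else B *m Ymx B
  end.

(* "S(A) = M": the alternate minimization sequence converges (entrywise) to M *)
Definition sinkhorn_limit (A M : 'M[R]_n) : Prop :=
  forall i j, (fun l => am_seq A l i j) @ \oo --> M i j.

End Sinkhorn.

Definition mx2 (R : realType) (x11 x12 x21 x22 : R) : 'M[R]_2 :=
  \matrix_(i < 2, j < 2)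
    if i == ord0 then (if j == ord0 then x11 else x12)
    else (if j == ord0 then x21 else x22).

From HB Require Import structures.
From mathcomp Require Import all_boot all_order all_algebra.
From mathcomp Require Import all_classical all_reals all_analysis.
From mathcomp Require Import lra ring.
Import Order.TTheory GRing.Theory Num.Theory.
Import numFieldNormedType.Exports.
Local Open Scope classical_set_scope.
Local Open Scope ring_scope.

(* If A Y(A) is doubly stochastic, every later scaling step is the identity, and
   the first row sum of A Y(A) being 1 says a11 a12 = a21 a22, which is the
   announced shape of A.  The row case reduces to the column case by
   transposition, but the sequence of A = [[a, b], [b t, a t]] starts with a
   column scaling and never stops.  Its column stochastic iterates are
     [[share a b z, share b a z], [share b a (-z), share a b (-z)]],
   share a b z = a (1 + z) / (a (1 + z) + b (1 - z)), and the row stochastic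
   ones are their transposes; in the coordinate z each scaling step is the
   contraction z |-> (b - a) / (a + b) * z, so the iterates converge to the
   matrix at z = 0. *)

Lemma cvg_parity (T : topologicalType) (u v : nat -> T) (L : T) :
  u @ \oo --> L -> v @ \oo --> L ->
  (fun l => if odd l then u l else v l) @ \oo --> L.
Proof.
move=> hu hv P LP; have := hu P LP; have := hv P LP.
rewrite !nbhs_filterE /= => vP uP.
by apply: (@filterS2 _ _ _ _ _ _ _ uP vP) => l /=; case: odd.
Qed.

Section Scaling.
Context {R : realType} {n : nat}.
Implicit Types A B : 'M[R]_n.

Lemma row_sum_tr A i : row_sum A^T i = col_sum A i.
Proof. by apply: eq_bigr => j _; rewrite mxE. Qed.

Lemma col_sum_tr A j : col_sum A^T j = row_sum A j.
Proof. by apply: eq_bigr => i _; rewrite mxE. Qed.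

Lemma doubly_stochastic_tr A : doubly_stochastic A^T <-> doubly_stochastic A.
Proof.
rewrite /doubly_stochastic.
split=> -[hr hc]; split=> i.
- by rewrite -col_sum_tr.
- by rewrite -row_sum_tr.
- by rewrite row_sum_tr.
- by rewrite col_sum_tr.
Qed.

Lemma Xmx_tr A : Xmx A = Ymx A^T.
Proof. by congr diag_mx; apply/rowP => i; rewrite !mxE col_sum_tr. Qed.

Lemma row_scaling_tr A : Xmx A *m A = (A^T *m Ymx A^T)^T.
Proof. by rewrite trmx_mul trmxK -Xmx_tr /Xmx tr_diag_mx. Qed.

Lemma row_scaling_id B : doubly_stochastic B -> Xmx B *m B = B.
Proof.
move=> [hr _]; rewrite /Xmx; have -> : \row_i (row_sum B i)^-1 = const_mx 1.
  by apply/rowP => i; rewrite !mxE hr invr1.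
by rewrite diag_const_mx mul_scalar_mx scale1r.
Qed.

Lemma col_scaling_id B : doubly_stochastic B -> B *m Ymx B = B.
Proof.
move=> [_ hc]; rewrite /Ymx; have -> : \row_j (col_sum B j)^-1 = const_mx 1.
  by apply/rowP => j; rewrite !mxE hc invr1.
by rewrite diag_const_mx mul_mx_scalar scale1r.
Qed.

Lemma am_seqS A l : am_seq A l.+1 =
  if odd l then Xmx (am_seq A l) *m am_seq A l else am_seq A l *m Ymx (am_seq A l).
Proof. by []. Qed.

Lemma am_seq_col_scaling_ds A : doubly_stochastic (A *m Ymx A) ->
  forall l, am_seq A l.+1 = A *m Ymx A.
Proof.
move=> ds; elim=> [//|l IH]; rewrite am_seqS IH.
by case: ifP => _; [rewrite row_scaling_id | rewrite col_scaling_id].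
Qed.

Lemma sinkhorn_limit_col_scaling_ds A : doubly_stochastic (A *m Ymx A) ->
  sinkhorn_limit A (A *m Ymx A).
Proof.
move=> ds i j; rewrite -cvg_shiftS.
have -> : (fun l => am_seq A l.+1 i j) = fun=> (A *m Ymx A) i j.
  by apply: funext => l; rewrite am_seq_col_scaling_ds.
exact: cvg_cst.
Qed.

End Scaling.

Section TwoByTwo.
Context {R : realType}.
Implicit Types a b c d t : R.

Lemma ord2_cases (i : 'I_2) : i = ord0 \/ i = ord_max.
Proof. by case: i => -[|[|//]] ?; [left|right]; apply: val_inj. Qed.

Lemma mx2E00 a b c d : mx2 a b c d ord0 ord0 = a. Proof. by rewrite mxE. Qed.
Lemma mx2E01 a b c d : mx2 a b c d ord0 ord_max = b. Proof. by rewrite mxE. Qed.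
Lemma mx2E10 a b c d : mx2 a b c d ord_max ord0 = c. Proof. by rewrite mxE. Qed.
Lemma mx2E11 a b c d : mx2 a b c d ord_max ord_max = d. Proof. by rewrite mxE. Qed.
Definition mx2E := (mx2E00, mx2E01, mx2E10, mx2E11).

Lemma mx2P (A B : 'M[R]_2) :
  [/\ A ord0 ord0 = B ord0 ord0, A ord0 ord_max = B ord0 ord_max,
      A ord_max ord0 = B ord_max ord0 & A ord_max ord_max = B ord_max ord_max] ->
  A = B.
Proof.
move=> [e00 e01 e10 e11]; apply/matrixP => i j.
by case: (ord2_cases i) => ->; case: (ord2_cases j) => ->.
Qed.

Lemma mx2_eta (A : 'M[R]_2) :
  A = mx2 (A ord0 ord0) (A ord0 ord_max) (A ord_max ord0) (A ord_max ord_max).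
Proof. by apply: mx2P; rewrite !mx2E. Qed.

Lemma tr_mx2 a b c d : (mx2 a b c d)^T = mx2 a c b d.
Proof. by apply: mx2P; rewrite !mxE. Qed.

Lemma big_ord2 (F : 'I_2 -> R) : \sum_(j < 2) F j = F ord0 + F ord_max.
Proof. by rewrite big_ord_recr big_ord1; congr (F _ + F _); apply: val_inj. Qed.

Lemma row_sum_mx2 a b c d :
  row_sum (mx2 a b c d) ord0 = a + b /\ row_sum (mx2 a b c d) ord_max = c + d.
Proof. by rewrite /row_sum !big_ord2 !mx2E. Qed.

Lemma col_sum_mx2 a b c d :
  col_sum (mx2 a b c d) ord0 = a + c /\ col_sum (mx2 a b c d) ord_max = b + d.
Proof. by rewrite /col_sum !big_ord2 !mx2E. Qed.

Lemma col_scaling_mx2 a b c d : mx2 a b c d *m Ymx (mx2 a b c d) =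
  mx2 (a / (a + c)) (b / (b + d)) (c / (a + c)) (d / (b + d)).
Proof.
have [s0 s1] := col_sum_mx2 a b c d.
by apply: mx2P; rewrite /Ymx !mul_mx_diag !mx2E !mxE s0 s1.
Qed.

Lemma col_scaling_ds_cross (A : 'M[R]_2) :
  positive_mx A -> doubly_stochastic (A *m Ymx A) ->
  exists a c t, 0 < a /\ 0 < c /\ 0 < t /\ A = mx2 a (c * t) c (a * t).
Proof.
move=> pos [+ _] => /(_ ord0).
rewrite [A]mx2_eta col_scaling_mx2 (row_sum_mx2 _ _ _ _).1.
set p := A ord0 ord0; set q := A ord0 ord_max; set r := A ord_max ord0.
set s := A ord_max ord_max => row0.
have [p0 q0 r0 s0] : [/\ 0 < p, 0 < q, 0 < r & 0 < s] by split; apply: pos.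
have pr0 : p + r != 0 by rewrite gt_eqF ?addr_gt0.
have qs0 : q + s != 0 by rewrite gt_eqF ?addr_gt0.
have cross : p * q = r * s.
  suff : p * (q + s) + q * (p + r) = (p + r) * (q + s) by move=> ?; nra.
  by rewrite -[RHS]mul1r -row0; field; rewrite pr0 qs0.
exists p, r, ((q + s) / (p + r)); do !split => //; first by rewrite divr_gt0 ?addr_gt0.
by congr mx2; apply: (mulIf pr0); rewrite -mulrA divfK //; nra.
Qed.

Lemma col_scaling_mx2_cross a c t : 0 < a -> 0 < c -> 0 < t ->
  mx2 a (c * t) c (a * t) *m Ymx (mx2 a (c * t) c (a * t)) =
  mx2 (a / (a + c)) (c / (a + c)) (c / (a + c)) (a / (a + c)).
Proof.
move=> a0 c0 t0; rewrite col_scaling_mx2 -mulrDl.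
have ac0 : a + c != 0 by rewrite gt_eqF ?addr_gt0.
have t0' : t != 0 by rewrite gt_eqF.
by congr mx2; field; rewrite ac0 t0'.
Qed.

Definition share a b (z : R) := a * (1 + z) / (a * (1 + z) + b * (1 - z)).
Definition reldiff (x y : R) := (y - x) / (x + y).

Lemma reldiff_swap x y : reldiff y x = - reldiff x y.
Proof. by rewrite /reldiff [y + x]addrC -mulNr opprB. Qed.

Lemma norm_reldiff_lt1 x y : 0 < x -> 0 < y -> `|reldiff x y| < 1.
Proof.
move=> x0 y0; have xy0 : 0 < x + y by rewrite addr_gt0.
rewrite ltr_norml ltr_pdivlMr ?ltr_pdivrMr // mulN1r mul1r; apply/andP; split; lra.
Qed.

Section Share.
Variables (a b z : R).
Hypotheses (a0 : 0 < a) (b0 : 0 < b) (z1 : `|z| < 1).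

Let z_bounds : -1 < z < 1. Proof. by rewrite -ltr_norml. Qed.
Let pz0 : 0 < 1 + z. Proof. by case/andP: z_bounds => ? ?; lra. Qed.
Let mz0 : 0 < 1 - z. Proof. by case/andP: z_bounds => ? ?; lra. Qed.

Let den_gt0 : 0 < a * (1 + z) + b * (1 - z).
Proof. by rewrite addr_gt0 ?mulr_gt0. Qed.

Lemma share_gt0 : 0 < share a b z.
Proof. by rewrite divr_gt0 ?mulr_gt0. Qed.

Lemma share_compl : share b a (- z) = 1 - share a b z.
Proof. by rewrite /share opprK; field; rewrite gt_eqF. Qed.

Lemma share_normalize :
  share a b z / (share a b z + share b a z) = share a b (reldiff a b * z).
Proof.
have D1 := den_gt0; have D2 : 0 < b * (1 + z) + a * (1 - z).
  by rewrite addr_gt0 ?mulr_gt0.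
have aD2 := mulr_gt0 a0 D2; have bD1 := mulr_gt0 b0 D1.
rewrite /share /reldiff; field.
rewrite !gt_eqF ?addr_gt0 ?mulr_gt0 //; nra.
Qed.

End Share.

Lemma norm_reldiff_mul_lt1 a b z : 0 < a -> 0 < b -> `|z| < 1 -> `|reldiff a b * z| < 1.
Proof.
move=> a0 b0 z1; rewrite normrM.
by apply: le_lt_trans z1; rewrite ler_piMl ?normr_ge0 ?ltW ?norm_reldiff_lt1.
Qed.

Lemma share_normalize_compl a b z : 0 < a -> 0 < b -> `|z| < 1 ->
  share b a z / (share a b z + share b a z) = share b a (- (reldiff a b * z)).
Proof.
move=> a0 b0 z1; have zb : `|reldiff a b * z| < 1 by exact: norm_reldiff_mul_lt1.
have sum0 : share a b z + share b a z != 0 by rewrite gt_eqF ?addr_gt0 ?share_gt0.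
by rewrite share_compl // -share_normalize //; field.
Qed.

Definition orbit_mx a b z : 'M[R]_2 :=
  mx2 (share a b z) (share b a z) (share b a (- z)) (share a b (- z)).

Lemma col_scaling_orbit_tr a b z : 0 < a -> 0 < b -> `|z| < 1 ->
  (orbit_mx a b z)^T *m Ymx (orbit_mx a b z)^T = orbit_mx a b (reldiff a b * z).
Proof.
move=> a0 b0 z1; have Nz1 : `|- z| < 1 by rewrite normrN.
rewrite tr_mx2 col_scaling_mx2; congr mx2.
- exact: share_normalize.
- by rewrite share_normalize // reldiff_swap mulrNN.
- exact: share_normalize_compl.
- by rewrite share_normalize_compl // reldiff_swap mulrNN.
Qed.

Lemma row_scaling_orbit a b z : 0 < a -> 0 < b -> `|z| < 1 ->
  Xmx (orbit_mx a b z) *m orbit_mx a b z = (orbit_mx a b (reldiff a b * z))^T.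
Proof. by move=> a0 b0 z1; rewrite row_scaling_tr col_scaling_orbit_tr. Qed.

Lemma col_scaling_orbit_init a b t : 0 < a -> 0 < b -> 0 < t ->
  mx2 a b (b * t) (a * t) *m Ymx (mx2 a b (b * t) (a * t)) = orbit_mx a b (reldiff t 1).
Proof.
move=> a0 b0 t0; rewrite col_scaling_mx2 /orbit_mx /share /reldiff.
have at0 := mulr_gt0 a0 t0; have bt0 := mulr_gt0 b0 t0.
by congr mx2; field; rewrite !gt_eqF //=; nra.
Qed.

Lemma orbit_mx0 a b :
  orbit_mx a b 0 = mx2 (a / (a + b)) (b / (a + b)) (b / (a + b)) (a / (a + b)).
Proof. by rewrite /orbit_mx /share oppr0 addr0 subr0 !mulr1 [b + a]addrC. Qed.

Lemma share_cvg a b (z_ : R ^nat) : 0 < a -> 0 < b -> z_ @ \oo --> 0 ->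
  share a b (z_ l) @[l --> \oo] --> share a b 0.
Proof.
move=> a0 b0 z0; rewrite /share.
have num : (fun l => a * (1 + z_ l)) @ \oo --> a * (1 + 0).
  exact: cvgM (cvg_cst _) (cvgD (cvg_cst _) z0).
have den : (fun l => a * (1 + z_ l) + b * (1 - z_ l)) @ \oo --> a * (1 + 0) + b * (1 - 0).
  exact: cvgD num (cvgM (cvg_cst _) (cvgB (cvg_cst _) z0)).
apply: cvgM num (cvgV _ den).
by rewrite subr0 addr0 !mulr1 gt_eqF ?addr_gt0.
Qed.

Lemma orbit_mx_cvg a b (z_ : R ^nat) : 0 < a -> 0 < b -> z_ @ \oo --> 0 ->
  forall i j, orbit_mx a b (z_ l) i j @[l --> \oo] --> orbit_mx a b 0 i j.
Proof.
move=> a0 b0 z0; have Nz0 : - z_ l @[l --> \oo] --> 0 by rewrite -oppr0; exact: cvgN.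
move=> i j; case: (ord2_cases i) => ->; case: (ord2_cases j) => ->;
  rewrite /orbit_mx !mx2E ?oppr0; under eq_fun do rewrite mx2E;
  by [apply: share_cvg | apply: (share_cvg _ _ _ _ _ Nz0)].
Qed.

End TwoByTwo.

Section CrossSymmetric.
Context {R : realType}.
Variables a b t : R.
Hypotheses (a0 : 0 < a) (b0 : 0 < b) (t0 : 0 < t).

Let A := mx2 a b (b * t) (a * t).
Let z_ l := reldiff a b ^+ l * reldiff t 1.

Let norm_z_lt1 l : `|z_ l| < 1.
Proof.
have z0_lt1 : `|reldiff t 1| < 1 by exact: norm_reldiff_lt1.
rewrite normrM normrX; apply: le_lt_trans z0_lt1.
by rewrite ler_piMl ?exprn_ile1 ?normr_ge0 ?ltW ?norm_reldiff_lt1.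
Qed.

Lemma am_seq_orbit l :
  am_seq A l.+1 = if odd l then (orbit_mx a b (z_ l))^T else orbit_mx a b (z_ l).
Proof.
elim: l => [|l IH]; first by rewrite /= col_scaling_orbit_init // /z_ expr0 mul1r.
have zS : z_ l.+1 = reldiff a b * z_ l by rewrite /z_ exprS mulrA.
rewrite am_seqS IH /= zS; case: (odd l) => /=.
- by rewrite col_scaling_orbit_tr.
- by rewrite row_scaling_orbit.
Qed.

Lemma sinkhorn_limit_cross_symmetric : sinkhorn_limit A (orbit_mx a b 0).
Proof.
have z0 : z_ @ \oo --> 0.
  rewrite -(mul0r (reldiff t 1)); apply: cvgM (cvg_cst _).
  by apply: cvg_expr; exact: norm_reldiff_lt1.
move=> i j; rewrite -cvg_shiftS.
under eq_fun do rewrite am_seq_orbit (fun_if (fun M : 'M[R]_2 => M i j)) mxE.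
apply: cvg_parity; last exact: orbit_mx_cvg.
have sym : (orbit_mx a b 0)^T = orbit_mx a b 0 by rewrite orbit_mx0 tr_mx2.
by rewrite -sym mxE; exact: orbit_mx_cvg.
Qed.

End CrossSymmetric.

Theorem theorem7 (R : realType) (A : 'M[R]_2) :
  positive_mx A -> ~ doubly_stochastic A ->
  (doubly_stochastic (A *m Ymx A) ->
     exists a c t : R, [/\ 0 < a /\ 0 < c /\ 0 < t,
       A = mx2 a (c * t) c (a * t),
       sinkhorn_limit A (A *m Ymx A) &
       A *m Ymx A = mx2 (a / (a + c)) (c / (a + c)) (c / (a + c)) (a / (a + c))])
  /\
  (doubly_stochastic (Xmx A *m A) ->
     exists a b t : R, [/\ 0 < a /\ 0 < b /\ 0 < t,
       A = mx2 a b (b * t) (a * t),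
       sinkhorn_limit A (Xmx A *m A) &
       Xmx A *m A = mx2 (a / (a + b)) (b / (a + b)) (b / (a + b)) (a / (a + b))]).
Proof.
move=> pos _; split=> ds.
- have [a [c [t [a0 [c0 [t0 eA]]]]]] := col_scaling_ds_cross _ pos ds.
  exists a, c, t; split=> //; first exact: sinkhorn_limit_col_scaling_ds.
  by rewrite [in LHS]eA col_scaling_mx2_cross.
- have posT : positive_mx A^T by move=> i j; rewrite mxE.
  have dsT : doubly_stochastic (A^T *m Ymx A^T).
    by rewrite -doubly_stochastic_tr -row_scaling_tr.
  have [a [b [t [a0 [b0 [t0 eAT]]]]]] := col_scaling_ds_cross _ posT dsT.
  have eA : A = mx2 a b (b * t) (a * t) by rewrite -[A]trmxK eAT tr_mx2.
  have eX : Xmx A *m A = mx2 (a / (a + b)) (b / (a + b)) (b / (a + b)) (a / (a + b)).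
    by rewrite row_scaling_tr eAT col_scaling_mx2_cross // tr_mx2.
  exists a, b, t; split=> //.
  by rewrite eX -orbit_mx0 [in X in sinkhorn_limit X]eA; exact: sinkhorn_limit_cross_symmetric.
Qed.
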